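(* Let $(\mathcal{S},\mathcal{A})$ be a finite directed acyclic graph with unique initial state $s_0$ and unique sink state $s_f$. For $i\in\{1,\dots,k\}$ let $p_{i,F}$ be a forward policy on this graph with partition function $Z_i>0$ and reaching probability $u_i$. Let $\omega_1,\dots,\omega_k\ge0$, set $v_i=\omega_iZ_i/\sum_{j=1}^k\omega_jZ_j$, $u_M(s)=\sum_{i=1}^k v_iu_i(s)$, and $$p_{M,F}(s'\mid s)=\sum_{i=1}^k\frac{v_iu_i(s)}{u_M(s)}\,p_{i,F}(s'\mid s)\quad\text{for all } s\in\mathcal{S}\setminus\{s_f\}.$$ Then $u_M$ coincides with the reaching probability induced by $p_{M,F}$: $u_M(s_0)=1$ and $u_M(s)=\sum_{s_*:(s_*\to s)\in\mathcal{A}}u_M(s_* )\,p_{M,F}(s\mid s_* )$ for all $s\in\mathcal{S}\setminus\{s_0\}$.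
   Context: A forward policy $p_F$ assigns to each state $s\neq s_f$ a probability distribution $p_F(\cdot\mid s)$ over the children $s'$ of $s$ (states with $(s\to s')\in\mathcal{A}$). Its reaching probability $u$ is defined by $u(s_0)=1$ and $u(s)=\sum_{s_*:(s_*\to s)\in\mathcal{A}}u(s_* )p_F(s\mid s_* )$ for $s\neq s_0$, i.e. the probability that a trajectory sampled from $p_F$ starting at $s_0$ visits $s$. *)

From HB Require Import structures.
From mathcomp Require Import all_boot all_order all_algebra.
Set Implicit Arguments. Unset Strict Implicit. Unset Printing Implicit Defensive.
Import Order.TTheory GRing.Theory Num.Theory.
Local Open Scope ring_scope.

Definition is_dag (S : finType) (A : rel S) (s0 sf : S) : Prop :=
  (forall s t : S, A s t -> ~~ connect A t s) /\
  (forall s : S, [forall t, ~~ A t s] <-> s = s0) /\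
  (forall s : S, [forall t, ~~ A s t] <-> s = sf).

Definition forward_policy (R : numDomainType) (S : finType) (A : rel S) (sf : S)
    (pF : S -> S -> R) : Prop :=
  forall s : S, s <> sf ->
    (forall s' : S, A s s' -> 0 <= pF s s') /\
    \sum_(s' | A s s') pF s s' = 1.

Definition reach_prob (R : numDomainType) (S : finType) (A : rel S) (s0 : S)
    (pF : S -> S -> R) (u : S -> R) : Prop :=
  u s0 = 1 /\
  forall s : S, s <> s0 -> u s = \sum_(s_ | A s_ s) u s_ * pF s_ s.

From HB Require Import structures.
From mathcomp Require Import all_boot all_order all_algebra.
Set Implicit Arguments. Unset Strict Implicit. Unset Printing Implicit Defensive.
Import Order.TTheory GRing.Theory Num.Theory.
Local Open Scope ring_scope.

(* On a DAG every reaching probability is nonnegative (induction along the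
   edges).  The mixture policy is built so that
     u_M(t) p_M(s | t) = sum_i v_i u_i(t) p_i(s | t),
   which also holds when u_M(t) = 0, since then every v_i u_i(t) vanishes.
   Hence the recursion for u_M is the v-weighted sum of the recursions for
   the u_i, and sum_i v_i = 1 gives u_M(s0) = 1. *)

Lemma acyclic_ind (S : finType) (A : rel S) :
  (forall s t, A s t -> ~~ connect A t s) ->
  forall P : S -> Prop, (forall s, (forall t, A t s -> P t) -> P s) ->
  forall s, P s.
Proof.
move=> acyc P IHA.
suff ancestors_ind n s : (#|[set t | connect A t s]| < n)%N -> P s.
  by move=> s; apply: (ancestors_ind _.+1).
elim: n s => [//|n IHn] s lt_anc; apply: IHA => t Ats; apply: IHn.
rewrite ltnS in lt_anc; apply: leq_trans lt_anc; apply/proper_card/properP; split.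
  by apply/subsetP => x; rewrite !inE => /connect_trans; apply; apply: connect1.
by exists s; rewrite inE ?connect0 ?acyc.
Qed.

Lemma reach_prob_ge0 (R : numDomainType) (S : finType) (A : rel S) (s0 sf : S)
    (pF : S -> S -> R) (u : S -> R) :
  is_dag A s0 sf -> forward_policy A sf pF -> reach_prob A s0 pF u ->
  forall s, 0 <= u s.
Proof.
move=> [acyc [_ sinkP]] pFP [u_s0 u_rec].
move=> s; elim/(acyclic_ind acyc): s => s IHs.
have [->|s_neq_s0] := eqVneq s s0; first by rewrite u_s0.
rewrite (u_rec s (elimN eqP s_neq_s0)); apply: sumr_ge0 => t Ats.
have t_neq_sf : t <> sf.
  by move/sinkP/forallP/(_ s); rewrite Ats.
by rewrite mulr_ge0 ?IHs ?(pFP t t_neq_sf).1.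
Qed.

Lemma psumr_gt0 (R : numDomainType) (I : finType) (a : I -> R) :
  (forall i, 0 <= a i) -> (exists i, 0 < a i) -> 0 < \sum_i a i.
Proof.
move=> a_ge0 [i a_gt0]; rewrite lt_def sumr_ge0 // andbT.
by apply/eqP => /psumr_eq0P/(_ i) a_eq0; rewrite a_eq0 ?ltxx in a_gt0.
Qed.

Section Mixture.

Variables (R : numFieldType) (S : finType) (I : finType).
Variables (v : I -> R) (pF : I -> S -> S -> R) (u : I -> S -> R).

Definition mix_reach (s : S) : R := \sum_i v i * u i s.

Definition mix_policy (s s' : S) : R :=
  \sum_i v i * u i s / mix_reach s * pF i s s'.

Hypothesis v_ge0 : forall i, 0 <= v i.
Hypothesis u_ge0 : forall i s, 0 <= u i s.

Lemma mix_reach_policy (s s' : S) :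
  mix_reach s * mix_policy s s' = \sum_i v i * u i s * pF i s s'.
Proof.
have vu_ge0 i : 0 <= v i * u i s by rewrite mulr_ge0.
rewrite /mix_policy mulr_sumr; apply: eq_bigr => i _.
have [uM_eq0|uM_neq0] := eqVneq (mix_reach s) 0.
  by rewrite (psumr_eq0P _ uM_eq0) ?mul0r ?mulr0.
by rewrite mulrA mulrCA mulfV ?mulr1.
Qed.

Lemma mix_reach_prob (A : rel S) (s0 : S) :
  \sum_i v i = 1 ->
  (forall i, reach_prob A s0 (pF i) (u i)) ->
  reach_prob A s0 mix_policy mix_reach.
Proof.
move=> sum_v uP; split.
  by rewrite /mix_reach -sum_v; apply: eq_bigr => i _; rewrite (uP i).1 mulr1.
move=> s s_neq_s0; under eq_bigr => t _ do rewrite mix_reach_policy.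
rewrite exchange_big; apply: eq_bigr => i _.
by rewrite ((uP i).2 s s_neq_s0) mulr_sumr; apply: eq_bigr => t _; rewrite mulrA.
Qed.

End Mixture.

Theorem lemmaA2 (R : realFieldType) (S : finType) (A : rel S) (s0 sf : S)
    (k : nat) (pF : 'I_k -> S -> S -> R) (u : 'I_k -> S -> R)
    (Z w : 'I_k -> R) :
  is_dag A s0 sf ->
  (forall i, forward_policy A sf (pF i)) ->
  (forall i, 0 < Z i) ->
  (forall i, reach_prob A s0 (pF i) (u i)) ->
  (forall i, 0 <= w i) ->
  (exists i, 0 < w i) ->
  let v := fun i => w i * Z i / \sum_(j < k) w j * Z j in
  let uM := fun s => \sum_(i < k) v i * u i s in
  let pM := fun s s' => \sum_(i < k) v i * u i s / uM s * pF i s s' in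
  reach_prob A s0 pM uM.
Proof.
move=> dag pFP Z_gt0 uP w_ge0 [i0 w_gt0] v uM pM.
have wZ_ge0 i : 0 <= w i * Z i by rewrite mulr_ge0 // ltW.
have sum_wZ_gt0 : 0 < \sum_(j < k) w j * Z j.
  by apply: psumr_gt0 => //; exists i0; rewrite mulr_gt0.
have v_ge0 i : 0 <= v i by rewrite divr_ge0 // ltW.
have sum_v : \sum_i v i = 1 by rewrite -mulr_suml mulfV ?gt_eqF.
have u_ge0 i s : 0 <= u i s := reach_prob_ge0 dag (pFP i) (uP i) s.
exact: (mix_reach_prob (pF := pF) v_ge0 u_ge0 sum_v uP).
Qed.
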